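(* Let $R=\mathbb{C}[u]/(u^2)$ and let $\mathcal{A}=(A_1,\dots,A_4)$ be a quadruple of $5\times5$ alternating matrices with entries $a^{(k)}_{ij}\in R$. Suppose the closed subscheme of $\mathbb{P}^3_R$ cut out by the five $4\times4$ principal sub-Pfaffians of $\mathcal{A}(\mathbf{x})=\sum_kA_kx_k$ has Zariski tangent space of dimension at least $2$ at a point $p$ (lying over $u=0$). Then there exists $\gamma\in U_4(\mathbb{C})\times U_5(\mathbb{C})$ such that either $\gamma(\mathcal{A})$ is in normal form of type $(K)$ for some $1\le K\le4$, or $\gamma(\mathcal{A})$ is in normal form of type $(I,J,K)$ for some $1\le I<J\le5$, $1\le K\le4$.
   Context: $U_n\subset\mathrm{GL}_n$ is the subgroup of lower triangular unipotent matrices, acting on quadruples by $A_k\mapsto\sum_l(g_4)_{kl}A_l$ and $A_k\mapsto g_5A_kg_5^t$. For $a\in R$, $a\equiv0\pmod u$ means $a\in uR$ and $a\equiv0\pmod{u^2}$ means $a=0$. A quadruple is in normal form of type $(K)$ if every entry of $A_K$ is $\equiv0\pmod u$. It is in normal form of type $(I,J,K)$ ($1\le I<J\le5$, $1\le K\le4$) if $a^{(k)}_{IJ}\equiv0\pmod u$ for all $k$; $a^{(K)}_{Ij}\equiv0\pmod u$ for all $j$; $a^{(K)}_{iJ}\equiv0\pmod u$ for all $i$; and $a^{(K)}_{IJ}\equiv0\pmod{u^2}$. *)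

(* The complex numbers are modelled as R[i] (the
   real-closed library's algebraic closure 'complex R') for an arbitrary
   R : realType; every realType is (isomorphic to) the field of real numbers,
   so R[i] is (isomorphic to) the complex field C. *)
From HB Require Import structures.
From mathcomp Require Import all_boot all_algebra.
From mathcomp Require Import reals.
From mathcomp.real_closed Require Import complex.
Set Implicit Arguments. Unset Strict Implicit. Unset Printing Implicit Defensive.
Import GRing.Theory Num.Theory.
Local Open Scope ring_scope.

(* Elements of R = C[u]/(u^2) are written a = a0 + u a1 with a0, a1 in C.   *)
(* A quadruple A = (A_1,..,A_4) of 5x5 matrices over R is thus given by two *)
(* quadruples of complex matrices A0, A1 : 'I_4 -> 'M_5 with                *)
(*   A_k = A0 k + u * A1 k.                                                 *)
(* Indices are 0-based: 'I_4 = {0,..,3} stands for {1,..,4}, etc.           *)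

Definition quad (F : Type) := 'I_4 -> 'M[F]_5.

Definition alternating (F : ringType) (n : nat) (M : 'M[F]_n) : Prop :=
  (forall i j, M i j = - M j i) /\ (forall i, M i i = 0).

(* A_k alternating over R  <=>  both components alternating over C *)
Definition alternating_quad (F : ringType) (A0 A1 : quad F) : Prop :=
  forall k, alternating (A0 k) /\ alternating (A1 k).

Definition o4 (n : nat) (h : (n < 4)%N) : 'I_4 := Ordinal h.
Definition subpf (S : comRingType) (M : 'M[S]_5) (i : 'I_5) : S :=
  let a := lift i (o4 (isT : (0 < 4)%N)) in
  let b := lift i (o4 (isT : (1 < 4)%N)) in
  let c := lift i (o4 (isT : (2 < 4)%N)) in
  let d := lift i (o4 (isT : (3 < 4)%N)) in
  M a b * M c d - M a c * M b d + M a d * M b c.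

(* Zariski tangent space.  Let X in P^3_R be cut out by the five Pfaffians  *)
(* subpf (sum_k x_k A_k) i.  A point p of X lying over u = 0 (a closed point *)
(* with residue field C) is given by homogeneous coordinates p : 'I_4 -> C, *)
(* p <> 0.  The Zariski tangent space T_p X = (m_p/m_p^2)^* is identified   *)
(* with the C-algebra maps O_{X,p} -> C[e]/(e^2) lifting p, i.e. with the   *)
(* C[e]-points of X over p.  Such a point is given by u |-> c e (c in C)    *)
(* and homogeneous coordinates x = p + e v (v in C^4), subject to           *)
(*    Pf_i( sum_k (A0 k + c e A1 k) (p_k + e v_k) ) = 0  in C[e]/(e^2),     *)
(* and (c, v), (c, v + t p) give the same point.  Hence                     *)
(*    T_p X = { (c,v) satisfying the equations } / C (0, p).                *)
(* We model C[e] as {poly C} with e = 'X and reduce modulo 'X^2.            *)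

Definition pencil_eps (C : fieldType) (A0 A1 : quad C) (p : 'I_4 -> C)
    (c : C) (v : 'I_4 -> C) : 'M[{poly C}]_5 :=
  \matrix_(i, j) \sum_(k < 4)
     ((A0 k i j)%:P + c *: 'X * (A1 k i j)%:P) * ((p k)%:P + v k *: 'X).

Definition tangent_vec (C : fieldType) (A0 A1 : quad C) (p : 'I_4 -> C)
    (c : C) (v : 'I_4 -> C) : Prop :=
  forall i : 'I_5, ('X^2 %| subpf (pencil_eps A0 A1 p c v) i)%R.

(* p is a (closed, C-valued) point of X:  Pf_i(sum_k A_k p_k) = 0 mod u *)
Definition on_special_fiber (C : fieldType) (A0 : quad C) (p : 'I_4 -> C)
    : Prop :=
  (exists k, p k != 0) /\
  forall i : 'I_5, subpf (\sum_(k < 4) p k *: A0 k) i = 0.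

(* dim_C T_p X >= 2 : there are two tangent vectors whose classes modulo
   the trivial direction (0, p) are linearly independent, i.e. (0,p), w1, w2
   are linearly independent in C x C^4. *)
Definition tangent_dim_ge2 (C : fieldType) (A0 A1 : quad C) (p : 'I_4 -> C)
    : Prop :=
  exists (c1 c2 : C) (v1 v2 : 'I_4 -> C),
    tangent_vec A0 A1 p c1 v1 /\ tangent_vec A0 A1 p c2 v2 /\
    forall a b d : C,
      a * 0 + b * c1 + d * c2 = 0 ->
      (forall k, a * p k + b * v1 k + d * v2 k = 0) ->
      [/\ a = 0, b = 0 & d = 0].

Definition lower_unipotent (C : ringType) (n : nat) (g : 'M[C]_n) : Prop :=
  (forall i j : 'I_n, (i < j)%N -> g i j = 0) /\ (forall i, g i i = 1).

(* gamma = (g4, g5):  A_k |-> g5 (sum_l (g4)_{kl} A_l) g5^T, applied to both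
   components (the action is C-linear, so it commutes with A = A0 + u A1). *)
Definition act (C : ringType) (g4 : 'M[C]_4) (g5 : 'M[C]_5) (A : quad C)
    : quad C :=
  fun k => g5 *m (\sum_(l < 4) g4 k l *: A l) *m g5^T.

(*   a = a0 + u a1 ;  a == 0 mod u  <=> a0 = 0 ;  a == 0 mod u^2 <=> a = 0. *)

Definition normal_form_K (C : ringType) (A0 A1 : quad C) (K : 'I_4) : Prop :=
  forall i j, A0 K i j = 0.

Definition normal_form_IJK (C : ringType) (A0 A1 : quad C)
    (I J : 'I_5) (K : 'I_4) : Prop :=
  [/\ forall k, A0 k I J = 0,
      forall j, A0 K I j = 0,
      forall i, A0 K i J = 0
    & A0 K I J = 0 /\ A1 K I J = 0].

(* Let M := A0(p) = sum_k p_k A0_k.  All 4x4 Pfaffians of M vanish, so either M = 0, and a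
   unipotent g4 whose row K is proportional to p (K the last index with p_K != 0) yields the
   normal form (K), or M has rank 2 and its kernel W is 3-dimensional, spanned by the vectors
   M_ab e_c + M_bc e_a + M_ca e_b for a nonzero entry M_ab.  For a tangent vector (c, v) the
   polarized Pfaffians of M against N := c A1(p) + A0(v) vanish, which makes W isotropic for N.
   The trivial tangent vector (0, p) and two further independent ones show that the 2-forms
   induced on W by A1(p), A0_1, ..., A0_4 span at most 2 of the 3 dimensions of the space of
   2-forms on W.  Hence a nonzero bivector on W, decomposable as x ^ y since dim W = 3, is
   annihilated by all of them, and x, y in echelon form give the rows I < J of g5, which yields
   the normal form (I, J, K). *)

From HB Require Import structures.
From mathcomp Require Import all_boot all_algebra.
From mathcomp Require Import reals.
From mathcomp.real_closed Require Import complex.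
From mathcomp Require Import ring zify.
Set Implicit Arguments. Unset Strict Implicit. Unset Printing Implicit Defensive.
Import GRing.Theory.
Local Open Scope ring_scope.

Section AlternatingFun4.
Variables (V : zmodType) (T : Type).

Definition alternating4 (f : T -> T -> T -> T -> V) :=
  [/\ forall a c d, f a a c d = 0,
      forall a b c d, f b a c d = - f a b c d,
      forall a b c d, f a c b d = - f a b c d &
      forall a b c d, f a b d c = - f a b c d].

Lemma alternating4B f g : alternating4 f -> alternating4 g ->
  alternating4 (fun a b c d => f a b c d - g a b c d).
Proof.
case=> f0 f12 f23 f34 [g0 g12 g23 g34].
split=> [a c d|a b c d|a b c d|a b c d]; first by rewrite f0 g0 subr0.
- by rewrite f12 g12 opprD.
- by rewrite f23 g23 opprD.
- by rewrite f34 g34 opprD.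
Qed.

End AlternatingFun4.

Definition eval_compl (V : Type) (f : 'I_5 -> 'I_5 -> 'I_5 -> 'I_5 -> V) (i : 'I_5) :=
  f (lift i (o4 (isT : (0 < 4)%N))) (lift i (o4 (isT : (1 < 4)%N)))
    (lift i (o4 (isT : (2 < 4)%N))) (lift i (o4 (isT : (3 < 4)%N))).

Lemma alternating4_eq0 (V : zmodType) (f : 'I_5 -> 'I_5 -> 'I_5 -> 'I_5 -> V) :
  alternating4 f -> (forall i, eval_compl f i = 0) -> forall a b c d, f a b c d = 0.
Proof.
case=> f_aa f12 f23 f34 f_compl.
have sort12 (a b c d : 'I_5) : (b < a)%N -> f b a c d = 0 -> f a b c d = 0.
  by move=> _ h; rewrite f12 h oppr0.
have sort23 (a b c d : 'I_5) : (c < b)%N -> f a c b d = 0 -> f a b c d = 0.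
  by move=> _ h; rewrite f23 h oppr0.
have sort34 (a b c d : 'I_5) : (d < c)%N -> f a b d c = 0 -> f a b c d = 0.
  by move=> _ h; rewrite f34 h oppr0.
have eq12 (a b c d : 'I_5) : val a = val b -> f a b c d = 0.
  by move=> /val_inj ->; apply: f_aa.
have eq23 (a b c d : 'I_5) : val b = val c -> f a b c d = 0.
  by move=> /val_inj ->; rewrite f12 f23 opprK f_aa.
have eq34 (a b c d : 'I_5) : val c = val d -> f a b c d = 0.
  by move=> /val_inj ->; rewrite f23 f34 opprK (eq23 _ _ _ _ erefl).
have sorted (i : nat) (hi : (i < 5)%N) (a b c d : 'I_5) : val a = bump i 0 ->
    val b = bump i 1 -> val c = bump i 2 -> val d = bump i 3 -> f a b c d = 0.
  move=> ea eb ec ed; rewrite -(f_compl (Ordinal hi)).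
  by congr f; apply: val_inj; [exact: ea | exact: eb | exact: ec | exact: ed].
(* Enumerate all index quadruples and bubble-sort each by adjacent transpositions;
   a sorted quadruple either repeats an index or lists the complement of the
   index 10 - (a + b + c + d). *)
do 4 case=> [[|[|[|[|[|//]]]]] ?];
repeat match goal with |- f ?a ?b ?c ?d = 0 =>
  first [ apply: (sort12 a b c d isT) | apply: (sort23 a b c d isT)
        | apply: (sort34 a b c d isT) ] end;
match goal with |- f ?a ?b ?c ?d = 0 =>
  first [ exact: (eq12 a b c d erefl) | exact: (eq23 a b c d erefl)
        | exact: (eq34 a b c d erefl)
        | exact: (sorted (10 - (a + b + c + d)) isT a b c d erefl erefl erefl erefl) ]
end.
Qed.

Section Pfaffian4.
Variables (R : comNzRingType) (n : nat).
Implicit Types M X Y : 'M[R]_n.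

Definition pf4 M (a b c d : 'I_n) : R :=
  M a b * M c d - M a c * M b d + M a d * M b c.

Definition pf4_polar X Y (a b c d : 'I_n) : R :=
  pf4 (X + Y) a b c d - pf4 X a b c d - pf4 Y a b c d.

Lemma alternatingD X Y : alternating X -> alternating Y -> alternating (X + Y).
Proof.
by case=> aX dX [aY dY]; split=> [i j|i]; rewrite !mxE ?dX ?dY ?addr0 // aX aY opprD.
Qed.

Lemma alternatingZ (s : R) M : alternating M -> alternating (s *: M).
Proof. by case=> aM dM; split=> [i j|i]; rewrite !mxE ?dM ?mulr0 // aM mulrN. Qed.

Lemma alternating_sum I (r : seq I) (P : pred I) (M : I -> 'M[R]_n) :
  (forall i, alternating (M i)) -> alternating (\sum_(i <- r | P i) M i).
Proof.
move=> aM; elim/big_rec: _ => [|i N _ aN]; last exact: alternatingD.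
by split=> [i j|i]; rewrite !mxE ?oppr0.
Qed.

Lemma alternating4_pf4 M : alternating M -> alternating4 (pf4 M).
Proof.
case=> aM dM; split=> [a c d|a b c d|a b c d|a b c d]; rewrite /pf4.
- by rewrite dM; ring.
- by rewrite (aM b a); ring.
- by rewrite (aM c b); ring.
- by rewrite (aM d c); ring.
Qed.

Lemma alternating4_polar X Y :
  alternating X -> alternating Y -> alternating4 (pf4_polar X Y).
Proof.
move=> aX aY; have aXY := alternating4_pf4 (alternatingD aX aY).
exact: alternating4B (alternating4B aXY (alternating4_pf4 aX)) (alternating4_pf4 aY).
Qed.

End Pfaffian4.

Lemma pf4_eq0 (R : comNzRingType) (M : 'M[R]_5) :
  alternating M -> (forall i, subpf M i = 0) -> forall a b c d, pf4 M a b c d = 0.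
Proof. by move=> aM; apply: alternating4_eq0; apply: alternating4_pf4. Qed.

Lemma coef1M (R : nzSemiRingType) (p q : {poly R}) :
  (p * q)`_1 = p`_0 * q`_1 + p`_1 * q`_0.
Proof. by rewrite coefM !big_ord_recl big_ord0 addr0. Qed.

Lemma coef_dvdpXn (F : fieldType) (q : {poly F}) k i :
  ('X^k %| q)%R -> (i < k)%N -> q`_i = 0.
Proof. by case/dvdpP=> r ->; rewrite coefMXn => ->. Qed.

Lemma subpf_coef1 (R : comNzRingType) (E : 'M[{poly R}]_5) i :
  (subpf E i)`_1 =
  eval_compl (pf4_polar (map_mx (coefp 0) E) (map_mx (coefp 1) E)) i.
Proof.
rewrite /subpf /eval_compl /pf4_polar /pf4 !mxE /=.
rewrite !coefD !coefN !coef1M; ring.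
Qed.

Definition pencil (R : nzRingType) (A : quad R) (x : 'I_4 -> R) : 'M[R]_5 :=
  \sum_k x k *: A k.

Lemma pencil_eps_coef (F : fieldType) (A0 A1 : quad F) p c v :
  map_mx (coefp 0) (pencil_eps A0 A1 p c v) = pencil A0 p /\
  map_mx (coefp 1) (pencil_eps A0 A1 p c v) = c *: pencil A1 p + pencil A0 v.
Proof.
have coef01 (a b x y : F) : let q := (a%:P + c *: 'X * b%:P) * (x%:P + y *: 'X) in
    q`_0 = x * a /\ q`_1 = c * (x * b) + y * a.
  by rewrite /= coef0M coef1M !coefD !coefMC !coefZ !coefC !coefX /=; split; ring.
split; apply/matrixP=> i j; rewrite !mxE /= coef_sum /pencil !summxE.
  by apply: eq_bigr => k _; rewrite !mxE; case: (coef01 (A0 k i j) (A1 k i j) (p k) (v k)).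
rewrite mulr_sumr -big_split /=; apply: eq_bigr => k _; rewrite !mxE.
by case: (coef01 (A0 k i j) (A1 k i j) (p k) (v k)).
Qed.

Lemma alternating_pencil (R : comNzRingType) (A : quad R) x :
  (forall k, alternating (A k)) -> alternating (pencil A x).
Proof. by move=> aA; apply: alternating_sum => k; apply: alternatingZ. Qed.

Lemma tangent_vec_polar_eq0 (F : fieldType) (A0 A1 : quad F) p c v :
  alternating_quad A0 A1 -> tangent_vec A0 A1 p c v ->
  forall a b d e, pf4_polar (pencil A0 p) (c *: pencil A1 p + pencil A0 v) a b d e = 0.
Proof.
move=> altA tv; have [aA0 aA1] : (forall k, alternating (A0 k)) /\ (forall k, alternating (A1 k)).
  by split=> k; case: (altA k).
apply: alternating4_eq0.
  apply: alternating4_polar; first exact: alternating_pencil.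
  by apply: alternatingD; [apply: alternatingZ|]; apply: alternating_pencil.
move=> i; have [<- <-] := pencil_eps_coef A0 A1 p c v.
by rewrite -subpf_coef1 (coef_dvdpXn (tv i)).
Qed.

Section Bilinear.
Variables (R : comNzRingType) (n : nat).
Implicit Types (N : 'M[R]_n) (x y : 'rV[R]_n).

Definition bil N x y : R := (x *m N *m y^T) 0 0.

Lemma bilDl N x1 x2 y : bil N (x1 + x2) y = bil N x1 y + bil N x2 y.
Proof. by rewrite /bil !mulmxDl mxE. Qed.

Lemma bilZl N a x y : bil N (a *: x) y = a * bil N x y.
Proof. by rewrite /bil -!scalemxAl mxE. Qed.

Lemma bilDr N x y1 y2 : bil N x (y1 + y2) = bil N x y1 + bil N x y2.
Proof. by rewrite /bil linearD /= mulmxDr mxE. Qed.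

Lemma bilZr N a x y : bil N x (a *: y) = a * bil N x y.
Proof. by rewrite /bil linearZ /= -scalemxAr mxE. Qed.

Lemma bilD N1 N2 x y : bil (N1 + N2) x y = bil N1 x y + bil N2 x y.
Proof. by rewrite /bil mulmxDr mulmxDl mxE. Qed.

Lemma bilZ a N x y : bil (a *: N) x y = a * bil N x y.
Proof. by rewrite /bil -scalemxAr -scalemxAl mxE. Qed.

Lemma bil_sum I (r : seq I) (P : pred I) (N : I -> 'M[R]_n) x y :
  bil (\sum_(i <- r | P i) N i) x y = \sum_(i <- r | P i) bil (N i) x y.
Proof.
elim/big_rec2: _ => [|i a M _ <-]; last by rewrite bilD.
by rewrite /bil mulmx0 mul0mx mxE.
Qed.

Lemma bil_delta N i j : bil N 'e_i 'e_j = N i j.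
Proof. by rewrite /bil -rowE trmx_delta -colE !mxE. Qed.

Lemma mulmx_trmx_entry (G S : 'M[R]_n) i j :
  (G *m S *m G^T) i j = bil S (row i G) (row j G).
Proof. by rewrite /bil tr_row colE !mulmxA -!row_mul -colE !mxE. Qed.

Lemma bilN N x y : bil (- N) x y = - bil N x y.
Proof. by rewrite /bil mulmxN mulNmx mxE. Qed.

Lemma bil_tr N x y : bil N^T x y = bil N y x.
Proof.
have tr11 (A : 'M[R]_1) : A 0 0 = A^T 0 0 by rewrite mxE.
by rewrite /bil tr11 !trmx_mul !trmxK mulmxA.
Qed.

Lemma bil_skew N x y : alternating N -> bil N y x = - bil N x y.
Proof.
case=> aN _; have NT : N^T = - N by apply/matrixP=> i j; rewrite !mxE aN.
by rewrite -bil_tr NT bilN.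
Qed.

(* Writing N = U - U^T with U strictly upper triangular avoids dividing by 2. *)
Lemma bil_self N x : alternating N -> bil N x x = 0.
Proof.
case=> aN dN; pose U := \matrix_(i, j) if (i < j)%N then N i j else 0.
have -> : N = U - U^T.
  apply/matrixP=> i j; rewrite !mxE; case: ltngtP => [_|ji|/val_inj->].
  - by rewrite subr0.
  - by rewrite sub0r -aN.
  - by rewrite dN subr0.
by rewrite bilD bilN bil_tr subrr.
Qed.

Lemma bil_kerl N x y : x *m N = 0 -> bil N x y = 0.
Proof. by rewrite /bil => ->; rewrite mul0mx mxE. Qed.

Lemma bil_kerr N x y : alternating N -> y *m N = 0 -> bil N x y = 0.
Proof. by move=> aN yN; rewrite bil_skew // bil_kerl ?oppr0. Qed.

Definition isotropic3 N (w1 w2 w3 : 'rV[R]_n) :=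
  [/\ bil N w2 w3 = 0, bil N w3 w1 = 0 & bil N w1 w2 = 0].

End Bilinear.

Section Independence.
Variables (R : nzRingType) (V : lmodType R).

Definition free2 (x y : V) :=
  forall s t : R, s *: x + t *: y = 0 -> s = 0 /\ t = 0.

Definition free3 (x y z : V) :=
  forall s t r : R, s *: x + t *: y + r *: z = 0 -> [/\ s = 0, t = 0 & r = 0].

Lemma free2C x y : free2 x y -> free2 y x.
Proof. by move=> fxy s t; rewrite addrC => /fxy[-> ->]. Qed.

Lemma free2_neq0 x y : free2 x y -> x != 0.
Proof.
move=> fxy; apply/eqP=> x0; case: (fxy 1 0); first by rewrite x0 scaler0 scale0r addr0.
by move/eqP; rewrite oner_eq0.
Qed.

End Independence.

Lemma matrix_neq0P (R : nzRingType) m n (A : 'M[R]_(m, n)) :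
  A != 0 -> exists i j, A i j != 0.
Proof.
move=> A_nz; case: (pickP (fun ij : 'I_m * 'I_n => A ij.1 ij.2 != 0)).
  by case=> i j Aij; exists i, j.
move=> A0; case/eqP: A_nz; apply/matrixP=> i j; rewrite mxE.
by apply/eqP; move/negbFE: (A0 (i, j)).
Qed.

Lemma exists_compl3 (a b : 'I_5) : a != b -> exists c d e : 'I_5, uniq [:: a; b; c; d; e].
Proof.
move=> ab; set s := rem b (rem a (enum 'I_5)).
have b_in : b \in rem a (enum 'I_5) by rewrite mem_rem_uniq ?enum_uniq // !inE eq_sym ab mem_enum.
have e5 : perm_eq (enum 'I_5) [:: a, b & s].
  by apply: perm_trans (perm_to_rem (mem_enum _ a)) _; rewrite perm_cons perm_to_rem.
have := perm_uniq e5; have := perm_size e5; rewrite enum_uniq size_enum_ord.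
by case: s e5 => [|c [|d [|e []]]] // _ _ uniq_s; exists c, d, e; rewrite -uniq_s.
Qed.

Section KernelBasis.
Variable F : fieldType.

Definition kervec n (X : 'M[F]_n) (a b c : 'I_n) : 'rV[F]_n :=
  X a b *: 'e_c + X b c *: 'e_a + X c a *: 'e_b.

Lemma kervec_coord n (X : 'M[F]_n) a b c j : a != j -> b != j ->
  kervec X a b c 0 j = X a b *+ (c == j).
Proof.
by move=> aj bj; rewrite !mxE /= !(eq_sym j) (negbTE aj) (negbTE bj) !mulr0 !addr0 mulr_natr.
Qed.

Lemma kervec_ker n (X : 'M[F]_n) a b c : alternating X ->
  (forall a b c d, pf4 X a b c d = 0) -> kervec X a b c *m X = 0.
Proof.
case=> aX _ pfX; apply/rowP=> j; rewrite !mulmxDl -!scalemxAl -!rowE !mxE.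
by rewrite -(pfX a b c j) /pf4 (aX c a); ring.
Qed.

Lemma bil_kervec n (X N : 'M[F]_n) a b c d : alternating X -> alternating N ->
  bil N (kervec X a b c) (kervec X a b d) =
  X a b * pf4_polar X N a b c d - N a b * pf4 X a b c d.
Proof.
case=> aX dX [aN dN].
rewrite /kervec !(bilDl, bilZl, bilDr, bilZr, bil_delta) /pf4_polar /pf4 !mxE.
by rewrite !dN (aN c a) (aN c b) (aN b a) (aX c a) (aX d a); ring.
Qed.

Lemma kernel_basis (X : 'M[F]_5) : alternating X -> (forall i, subpf X i = 0) ->
  X != 0 -> exists w1 w2 w3 : 'rV_5,
  [/\ w1 *m X = 0, w2 *m X = 0, w3 *m X = 0, free3 w1 w2 w3 &
      forall N, alternating N -> (forall a b c d, pf4_polar X N a b c d = 0) ->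
      isotropic3 N w1 w2 w3].
Proof.
move=> aX pfX X_nz; have pf0 := pf4_eq0 aX pfX.
have [a [b Xab]] := matrix_neq0P X_nz.
have ab : a != b by apply: contraNneq Xab => ->; case: aX => _ ->.
have [c [d [e]]] := exists_compl3 ab.
rewrite /= !inE !negb_or -!andbA.
case/and5P=> _ ac ad ae /and5P[bc bd be cd /and3P[ce de _]].
exists (kervec X a b c), (kervec X a b d), (kervec X a b e).
split; try exact: kervec_ker.
  move=> s t r /rowP coord; move: (coord c) (coord d) (coord e).
  have coordE (u1 u2 u3 : 'rV[F]_5) j :
    (s *: u1 + t *: u2 + r *: u3) 0 j = s * u1 0 j + t * u2 0 j + r * u3 0 j.
    by rewrite !mxE.
  rewrite !coordE !kervec_coord // !mxE !eqxx [d == c]eq_sym [e == c]eq_sym [e == d]eq_sym.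
  rewrite (negbTE cd) (negbTE ce) (negbTE de) !mulr0n !mulr1n !mulr0 !addr0 ?add0r.
  have cancel_Xab u : u * X a b = 0 -> u = 0.
    by move/eqP; rewrite mulf_eq0 (negbTE Xab) orbF => /eqP.
  by move=> /cancel_Xab-> /cancel_Xab-> /cancel_Xab->.
move=> N aN polar0.
by split; rewrite !bil_kervec // !polar0 !pf0 !mulr0 subrr.
Qed.
End KernelBasis.

Lemma coker_neq0 (F : fieldType) k n m (T : 'M[F]_(k, n)) (L : 'M[F]_(n, m)) :
  row_free T -> T *m L = 0 -> (n < k + m)%N -> exists2 lam : 'cV_m, lam != 0 & L *m lam = 0.
Proof.
move=> freeT TL nkm.
have rankL : (\rank L < m)%N.
  have := mxrankS (introT sub_kermxP TL); rewrite mxrank_ker (eqP freeT).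
  by move: (rank_leq_row L); lia.
have /rowV0Pn[v /sub_kermxP vL v_nz] : kermx L^T != 0.
  by rewrite -mxrank_eq0 mxrank_ker mxrank_tr; lia.
exists v^T; first by rewrite trmx_eq0.
by rewrite -[L]trmxK -trmx_mul vL trmx0.
Qed.

Lemma last_neq0 (F : fieldType) n (u : 'rV[F]_n) : u != 0 ->
  exists2 i, u 0 i != 0 & forall k : 'I_n, (i < k)%N -> u 0 k = 0.
Proof.
case/matrix_neq0P=> i0 [j0 u_j0]; rewrite (ord1 i0) in u_j0.
case: (@arg_maxnP _ j0 (fun k => u 0 k != 0) val u_j0) => i ui i_max.
exists i => // k ik.
by apply/eqP; apply: contraTT ik => /i_max; rewrite -leqNgt.
Qed.

Section UnipotentRows.
Variables (F : fieldType) (n : nat).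

Definition unipotent_row (i : 'I_n) (u : 'rV[F]_n) :=
  u 0 i = 1 /\ forall k : 'I_n, (i < k)%N -> u 0 k = 0.

Lemma unipotent_row1 i : unipotent_row i (row i 1%:M).
Proof.
split=> [|k ik]; rewrite !mxE ?eqxx //.
by case: eqP ik => [->|]; rewrite ?ltnn.
Qed.

Lemma unipotent_row_scale (u : 'rV[F]_n) i : u 0 i != 0 ->
  (forall k : 'I_n, (i < k)%N -> u 0 k = 0) -> unipotent_row i ((u 0 i)^-1 *: u).
Proof. by move=> ui u_tail; split=> [|k /u_tail]; rewrite mxE ?mulVf // => ->; rewrite mulr0. Qed.

Lemma lower_unipotent_rows (u : 'I_n -> 'rV[F]_n) :
  (forall i, unipotent_row i (u i)) -> lower_unipotent (\matrix_i u i).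
Proof.
move=> uu; have entry i j : (\matrix_i u i) i j = u i 0 j by rewrite !mxE.
by split=> [i j ij|i]; rewrite entry; [apply: (uu i).2 | apply: (uu i).1].
Qed.

Lemma lower_unipotent1 : lower_unipotent (1%:M : 'M[F]_n).
Proof.
have := lower_unipotent_rows unipotent_row1.
by congr lower_unipotent; apply/row_matrixP=> i; rewrite rowK.
Qed.

Lemma exists_lower_unipotent1 I x : unipotent_row I x ->
  exists2 g, lower_unipotent g & row I g = x.
Proof.
move=> uI; exists (\matrix_i if i == I then x else row i 1%:M); last by rewrite rowK eqxx.
by apply: lower_unipotent_rows => i; case: eqP => [->|_]; last exact: unipotent_row1.
Qed.

Lemma exists_lower_unipotent2 I J x y : I != J -> unipotent_row I x -> unipotent_row J y ->
  exists g, [/\ lower_unipotent g, row I g = x & row J g = y].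
Proof.
move=> IJ uI uJ; exists (\matrix_i if i == I then x else if i == J then y else row i 1%:M).
split; rewrite ?rowK ?eqxx //; last by rewrite eq_sym (negbTE IJ).
apply: lower_unipotent_rows => i.
by case: eqP => [->//|_]; case: eqP => [->//|_]; apply: unipotent_row1.
Qed.

End UnipotentRows.

Section IsotropicPair.
Variables (F : fieldType) (n : nat) (X : 'M[F]_n) (P : 'M[F]_n -> Prop).
Hypothesis P_alt : forall N, P N -> alternating N.
Implicit Types x y : 'rV[F]_n.

Definition isotropic_pair x y :=
  [/\ x *m X = 0, y *m X = 0 & forall N, P N -> bil N x y = 0].

Lemma isotropic_pairC x y : isotropic_pair x y -> isotropic_pair y x.
Proof. by case=> xX yX xy; split=> // N PN; rewrite bil_skew ?xy ?oppr0 //; apply: P_alt. Qed.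

Lemma isotropic_pairZl a x y : isotropic_pair x y -> isotropic_pair (a *: x) y.
Proof.
case=> xX yX xy; split=> [||N PN] //; last by rewrite bilZl xy ?mulr0.
by rewrite -scalemxAl xX scaler0.
Qed.

Lemma isotropic_pairZr a x y : isotropic_pair x y -> isotropic_pair x (a *: y).
Proof.
case=> xX yX xy; split=> [||N PN] //; last by rewrite bilZr xy ?mulr0.
by rewrite -scalemxAl yX scaler0.
Qed.

Lemma isotropic_pair_shear a x y : isotropic_pair x y -> isotropic_pair (x + a *: y) y.
Proof.
case=> xX yX xy; split=> [||N PN] //.
  by rewrite mulmxDl -scalemxAl xX yX scaler0 addr0.
by rewrite bilDl bilZl bil_self ?xy ?mulr0 ?addr0 //; apply: P_alt.
Qed.

(* Every bivector on a 3-space is decomposable: l0 (l0 w2^w3 + l1 w3^w1 + l2 w1^w2) equals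
   (l1 w1 - l0 w2) ^ (l2 w1 - l0 w3). *)
Lemma isotropic_pair_of_bivector (w1 w2 w3 : 'rV[F]_n) (l0 l1 l2 : F) :
  w1 *m X = 0 -> w2 *m X = 0 -> w3 *m X = 0 -> free3 w1 w2 w3 ->
  [|| l0 != 0, l1 != 0 | l2 != 0] ->
  (forall N, P N -> l0 * bil N w2 w3 + l1 * bil N w3 w1 + l2 * bil N w1 w2 = 0) ->
  exists x y, free2 x y /\ isotropic_pair x y.
Proof.
wlog l0_nz : w1 w2 w3 l0 l1 l2 / l0 != 0.
  move=> base w1X w2X w3X free_w nz rel; case/or3P: (nz) => nz'.
  - exact: (base w1 w2 w3 l0 l1 l2 nz' w1X w2X w3X free_w nz rel).
  - apply: (base w2 w3 w1 l1 l2 l0) => // [s t r e||N PN].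
    + by case: (free_w r s t) => [|-> -> ->]; first by rewrite -e [RHS]addrC addrA.
    + by rewrite nz'.
    + by rewrite addrC addrA rel.
  - apply: (base w3 w1 w2 l2 l0 l1) => // [s t r e||N PN].
    + by case: (free_w t r s) => [|-> -> ->]; first by rewrite -e [LHS]addrC addrA.
    + by rewrite nz'.
    + by rewrite -addrA addrC rel.
move=> w1X w2X w3X free_w _ rel.
exists (l1 *: w1 + (- l0) *: w2), (l2 *: w1 + (- l0) *: w3); split.
  move=> s t e; have [] := free_w (s * l1 + t * l2) (- (s * l0)) (- (t * l0)).
    by rewrite -e; apply/rowP=> j; rewrite !mxE; ring.
  have cancel_l0 u : - (u * l0) = 0 -> u = 0.
    by move/eqP; rewrite oppr_eq0 mulf_eq0 (negbTE l0_nz) orbF => /eqP.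
  by move=> _ /cancel_l0-> /cancel_l0->.
split=> [||N PN].
- by rewrite mulmxDl -!scalemxAl w1X w2X !scaler0 addr0.
- by rewrite mulmxDl -!scalemxAl w1X w3X !scaler0 addr0.
have aN := P_alt PN.
transitivity (l0 * (l0 * bil N w2 w3 + l1 * bil N w3 w1 + l2 * bil N w1 w2)).
  rewrite !(bilDl, bilDr, bilZl, bilZr) !bil_self //.
  by rewrite (bil_skew w3 w1 aN) (bil_skew w1 w2 aN); ring.
by rewrite rel // mulr0.
Qed.

Lemma isotropic_pair_echelon x y : free2 x y -> isotropic_pair x y ->
  exists (I J : 'I_n) x' y',
    [/\ (I < J)%N, unipotent_row I x', unipotent_row J y' & isotropic_pair x' y'].
Proof.
move=> fxy ixy.
have [Jx xJx x_tail] := last_neq0 (free2_neq0 fxy).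
have [J yJ y_tail] := last_neq0 (free2_neq0 (free2C fxy)).
wlog le_JxJ : x y Jx J fxy ixy xJx x_tail yJ y_tail / (Jx <= J)%N.
  move=> base; case: (leqP Jx J) => [le|/ltnW lt]; first exact: (base x y Jx J).
  by apply: (base y x J Jx) => //; [exact: free2C | exact: isotropic_pairC].
set y' := (y 0 J)^-1 *: y; set z := x + (- x 0 J) *: y'.
have z_tail (k : 'I_n) : (J <= k)%N -> z 0 k = 0.
  rewrite leq_eqVlt => /orP[/eqP/val_inj<-|Jk]; rewrite !mxE.
    by rewrite mulVf // mulr1 addrN.
  by rewrite (y_tail k Jk) (x_tail k (leq_ltn_trans le_JxJ Jk)) !mulr0 addr0.
have z_nz : z != 0.
  apply/eqP=> z0; case: (fxy 1 (- x 0 J * (y 0 J)^-1)).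
    by rewrite scale1r -scalerA.
  by move/eqP; rewrite oner_eq0.
have [I zI zI_tail] := last_neq0 z_nz.
have IJ : (I < J)%N by rewrite ltnNge; apply: contra zI => /z_tail ->.
exists I, J, ((z 0 I)^-1 *: z), y'; split => //.
- exact: unipotent_row_scale.
- exact: unipotent_row_scale.
by apply/isotropic_pairZl/isotropic_pair_shear/isotropic_pairZr.
Qed.

End IsotropicPair.

Section CoordinateRows.
Variable F : fieldType.

Definition coord_row (c : F) (v : 'I_4 -> F) : 'rV[F]_(1 + 4) := row_mx c%:M (\row_k v k).

Lemma coord_row_mul m c v (r : 'rV[F]_m) (R : 'I_4 -> 'rV[F]_m) :
  coord_row c v *m col_mx r (\matrix_k R k) = c *: r + \sum_k v k *: R k.
Proof.
rewrite mul_row_col mul_scalar_mx mulmx_sum_row; congr (_ + _).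
by apply: eq_bigr => k _; rewrite rowK mxE.
Qed.

Lemma row_free_coord_rows (p : 'I_4 -> F) c1 c2 (v1 v2 : 'I_4 -> F) :
  (forall a b d : F, a * 0 + b * c1 + d * c2 = 0 ->
     (forall k, a * p k + b * v1 k + d * v2 k = 0) -> [/\ a = 0, b = 0 & d = 0]) ->
  row_free (\matrix_(s < 3) [:: coord_row 0 p; coord_row c1 v1; coord_row c2 v2]`_s).
Proof.
move=> indep; apply/inj_row_free=> a.
rewrite mulmx_sum_row !big_ord_recl big_ord0 addr0 !rowK /= /coord_row.
rewrite !scale_row_mx !add_row_mx -row_mx0 => /eq_row_mx[/rowP/(_ ord0) hc /rowP hv].
move: hc; rewrite !mxE /= => hc.
have [] := indep (a 0 ord0) (a 0 (lift ord0 ord0)) (a 0 (lift ord0 (lift ord0 ord0))).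
- by rewrite -[RHS]hc; ring.
- by move=> k; move: (hv k); rewrite !mxE => h; rewrite -[RHS]h; ring.
move=> a0 a1 a2; apply/rowP=> -[[|[|[|//]]] ?]; rewrite mxE;
  [rewrite -a0 | rewrite -a1 | rewrite -a2];
by congr (a 0 _); apply: val_inj.
Qed.

End CoordinateRows.

Section NormalForm.
Variables (F : fieldType) (A0 A1 : quad F) (p : 'I_4 -> F).
Hypothesis altA : alternating_quad A0 A1.

Definition tangent_gen (N : 'M[F]_5) := N = pencil A1 p \/ exists k, N = A0 k.

Lemma alternating_A0 k : alternating (A0 k). Proof. by case: (altA k). Qed.
Lemma alternating_A1 k : alternating (A1 k). Proof. by case: (altA k). Qed.

Lemma tangent_gen_alt N : tangent_gen N -> alternating N.
Proof.
case=> [->|[k ->]]; last exact: alternating_A0.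
exact/alternating_pencil/alternating_A1.
Qed.

Lemma tangent_bivector (w1 w2 w3 : 'rV[F]_5) :
  tangent_dim_ge2 A0 A1 p -> isotropic3 (pencil A0 p) w1 w2 w3 ->
  (forall c v, tangent_vec A0 A1 p c v ->
     isotropic3 (c *: pencil A1 p + pencil A0 v) w1 w2 w3) ->
  exists l0 l1 l2, [|| l0 != 0, l1 != 0 | l2 != 0] /\ forall N, tangent_gen N ->
     l0 * bil N w2 w3 + l1 * bil N w3 w1 + l2 * bil N w1 w2 = 0.
Proof.
case=> c1 [c2 [v1 [v2 [tv1 [tv2 indep]]]]] iso0 iso.
pose phi N : 'rV_3 := \row_r [:: bil N w2 w3; bil N w3 w1; bil N w1 w2]`_r.
have phiE c v :
    phi (c *: pencil A1 p + pencil A0 v) = c *: phi (pencil A1 p) + \sum_k v k *: phi (A0 k).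
  apply/rowP=> r; rewrite !mxE summxE; under eq_bigr do rewrite !mxE.
  case: r => [[|[|[|//]]] ?] /=; rewrite bilD bilZ /pencil !bil_sum;
  by congr (_ + _); apply: eq_bigr => k _; rewrite bilZ.
have phi0 N : isotropic3 N w1 w2 w3 -> phi N = 0.
  by case=> h23 h31 h12; apply/rowP=> -[[|[|[|//]]] ?]; rewrite !mxE.
(* L sends the coordinates of (c, v) to phi (c A1(p) + A0(v)); as its kernel contains three
   independent rows, some lam != 0 annihilates its image. *)
pose L := col_mx (phi (pencil A1 p)) (\matrix_k phi (A0 k)).
have TL : \matrix_(s < 3) [:: coord_row 0 p; coord_row c1 v1; coord_row c2 v2]`_s *m L = 0.
  apply/row_matrixP=> -[[|[|[|//]]] ?]; rewrite row_mul rowK row0 /= coord_row_mul -phiE.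
  - by rewrite scale0r add0r phi0.
  - exact/phi0/iso.
  - exact/phi0/iso.
have [lam lam_nz Llam] := coker_neq0 (row_free_coord_rows indep) TL isT.
exists (lam ord0 0), (lam (lift ord0 ord0) 0), (lam (lift ord0 (lift ord0 ord0)) 0).
split.
  apply: contraNT lam_nz => /norP[/negPn/eqP l0 /norP[/negPn/eqP l1 /negPn/eqP l2]].
  apply/eqP/matrixP=> i j; rewrite (ord1 j) mxE.
  case: i => [[|[|[|//]]] ?]; [rewrite -l0 | rewrite -l1 | rewrite -l2];
  by congr (lam _ 0); apply: val_inj.
move/eqP: Llam; rewrite mul_col_mx col_mx_eq0 => /andP[/eqP L1 /eqP L2].
move=> N [->|[k ->]].
  move: (congr1 (fun w : 'M_1 => w 0 0) L1); rewrite !mxE !big_ord_recl big_ord0 !mxE /=.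
  by move=> h; rewrite -[RHS]h; ring.
move: (congr1 (fun w : 'M_(4, 1) => w k 0) L2); rewrite !mxE !big_ord_recl big_ord0 !mxE /=.
by move=> h; rewrite -[RHS]h; ring.
Qed.

Lemma isotropic_echelon_plane :
  on_special_fiber A0 p -> tangent_dim_ge2 A0 A1 p -> pencil A0 p != 0 ->
  exists (I J : 'I_5) x y, [/\ (I < J)%N, unipotent_row I x, unipotent_row J y &
    isotropic_pair (pencil A0 p) tangent_gen x y].
Proof.
case=> _ pf0 tdim M0_nz.
have aM0 := alternating_pencil p alternating_A0.
have [w1 [w2 [w3 [k1 k2 k3 free_w iso_w]]]] := kernel_basis aM0 pf0 M0_nz.
have [|c v tv|l0 [l1 [l2 [nz rel]]]] := tangent_bivector (w1 := w1) (w2 := w2) (w3 := w3) tdim.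
- by split; apply: bil_kerl.
- apply: iso_w (tangent_vec_polar_eq0 altA tv).
  apply: alternatingD; first exact/alternatingZ/alternating_pencil/alternating_A1.
  exact: alternating_pencil alternating_A0.
have [x [y [fxy ixy]]] := isotropic_pair_of_bivector tangent_gen_alt k1 k2 k3 free_w nz rel.
exact (isotropic_pair_echelon tangent_gen_alt fxy ixy).
Qed.

Theorem unipotent_normal_form :
  on_special_fiber A0 p -> tangent_dim_ge2 A0 A1 p ->
  exists (g4 : 'M[F]_4) (g5 : 'M[F]_5),
    lower_unipotent g4 /\ lower_unipotent g5 /\
    ((exists K : 'I_4, normal_form_K (act g4 g5 A0) (act g4 g5 A1) K) \/
     (exists (I J : 'I_5) (K : 'I_4), (I < J)%N /\
        normal_form_IJK (act g4 g5 A0) (act g4 g5 A1) I J K)).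
Proof.
move=> fib tdim; have [[k0 pk0] _] := fib.
have row_p_nz : \row_l p l != 0.
  by apply: contraNneq pk0 => /rowP/(_ k0); rewrite !mxE => ->.
have [K pK p_tail] := last_neq0 row_p_nz.
have [g4 g4_lu g4K] := exists_lower_unipotent1 (unipotent_row_scale pK p_tail).
have actK A g5 i j : act g4 g5 A K i j = (p K)^-1 * bil (pencil A p) (row i g5) (row j g5).
  rewrite /act mulmx_trmx_entry -bilZ /pencil scaler_sumr; congr bil.
  apply: eq_bigr => l _; rewrite scalerA.
  by move/rowP/(_ l): g4K; rewrite !mxE => ->.
have [M0_0|M0_nz] := eqVneq (pencil A0 p) 0.
  exists g4, 1%:M; split; [|split; [exact: lower_unipotent1 | left; exists K]] => //.
  by move=> i j; rewrite actK M0_0 bil_kerl ?mulmx0 ?mulr0.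
have [I [J [x [y [IJ ux uy [xM0 yM0 iso]]]]]] := isotropic_echelon_plane fib tdim M0_nz.
have [g5 [g5_lu rI rJ]] := exists_lower_unipotent2 (negbT (ltn_eqF IJ)) ux uy.
have A0_IJ k : act g4 g5 A0 k I J = 0.
  rewrite /act mulmx_trmx_entry rI rJ bil_sum big1 // => l _.
  by rewrite bilZ iso ?mulr0 //; right; exists l.
exists g4, g5; split=> //; split=> //; right; exists I, J, K; split=> //; split=> //.
- by move=> j; rewrite actK rI bil_kerl ?mulr0.
- by move=> i; rewrite actK rJ bil_kerr ?mulr0 //; apply: alternating_pencil alternating_A0.
- by split; last by rewrite actK rI rJ iso ?mulr0 //; left.
Qed.

End NormalForm.

Theorem lemma4p6 (R : realType) (A0 A1 : quad R[i]) (p : 'I_4 -> R[i]) :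
  alternating_quad A0 A1 ->
  on_special_fiber A0 p ->
  tangent_dim_ge2 A0 A1 p ->
  exists (g4 : 'M[R[i]]_4) (g5 : 'M[R[i]]_5),
    lower_unipotent g4 /\ lower_unipotent g5 /\
    ((exists K : 'I_4, normal_form_K (act g4 g5 A0) (act g4 g5 A1) K) \/
     (exists (I J : 'I_5) (K : 'I_4), (I < J)%N /\
        normal_form_IJK (act g4 g5 A0) (act g4 g5 A1) I J K)).
Proof. exact: unipotent_normal_form. Qed.
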